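(* For $NX\in\{2A,3A,3C\}$: (i) the identity of $V_{NX}$ is the unique decomposable idempotent of $V_{NX}$; (ii) there are no non-trivial associative subalgebras of $V_{NX}$.
   Context: The Norton–Sakuma algebras considered (real commutative algebras with identity and positive definite inner product $(\,,)$): $V_{2A}$ has basis $a_0,a_1,a_2$ with $a_i\cdot a_i=a_i$, $a_i\cdot a_j=\frac18(a_i+a_j-a_k)$ for $\{i,j,k\}=\{0,1,2\}$, $(a_i,a_i)=1$, $(a_i,a_j)=\frac18$ for $i\neq j$. $V_{3C}$ has basis $a_0,a_1,a_2$ with $a_i\cdot a_i=a_i$, $a_i\cdot a_j=\frac1{64}(a_i+a_j-a_k)$ for $\{i,j,k\}=\{0,1,2\}$, $(a_i,a_i)=1$, $(a_i,a_j)=\frac1{64}$ for $i\ne j$. $V_{3A}$ has basis $a_0,a_1,a_2,u$ with $a_i\cdot a_i=a_i$, $u\cdot u=u$, $a_i\cdot a_j=\frac1{32}(2a_i+2a_j+a_k)-\frac{135}{2^{11}}u$ and $a_i\cdot u=\frac19(2a_i-a_j-a_k)+\frac5{32}u$ for $\{i,j,k\}=\{0,1,2\}$, $(a_i,a_i)=1$, $(a_i,a_j)=\frac{13}{2^8}$ for $i\neq j$, $(a_i,u)=\frac14$, $(u,u)=\frac85$. (These are the subalgebras of the Griess algebra generated by two $2A$-axes whose involutions have product in Monster class $2A$, $3C$, $3A$ respectively.) An idempotent is decomposable if it is a sum of at least two non-zero idempotents. For a non-zero idempotent $x\neq\mathbb 1$, $V_x$ is the span of $\{x,\mathbb 1-x\}$;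 also $V_0$, $V_{\mathbb 1}$ are the subalgebras generated by $0$ and $\mathbb 1$. An associative subalgebra is trivial if it equals $V_x$ for some idempotent $x$, non-trivial otherwise. *)

From HB Require Import structures.
From mathcomp Require Import all_boot all_order all_algebra.
From mathcomp Require Import reals.
Set Implicit Arguments. Unset Strict Implicit. Unset Printing Implicit Defensive.
Import Order.TTheory GRing.Theory Num.Theory.
Local Open Scope ring_scope.

Section Generic.
Variables (R : fieldType) (n : nat).

Definition tabmul (T : 'I_n -> 'I_n -> 'rV[R]_n) (u v : 'rV[R]_n) : 'rV[R]_n :=
  \sum_(i < n) \sum_(j < n) (u 0 i * v 0 j) *: T i j.

Variable mul : 'rV[R]_n -> 'rV[R]_n -> 'rV[R]_n.

Definition is_idempotent (x : 'rV[R]_n) : Prop := mul x x = x.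

Definition is_identity (e : 'rV[R]_n) : Prop :=
  forall x, mul e x = x /\ mul x e = x.

Definition decomposable (x : 'rV[R]_n) : Prop :=
  is_idempotent x /\
  exists s : seq 'rV[R]_n,
    (2 <= size s)%N /\
    (forall y, y \in s -> y != 0 /\ is_idempotent y) /\
    x = \sum_(y <- s) y.

Definition is_subalgebra (one : 'rV[R]_n) (A : {vspace 'rV[R]_n}) : Prop :=
  one \in A /\ (forall u v, u \in A -> v \in A -> mul u v \in A).

Definition is_associative_on (A : {vspace 'rV[R]_n}) : Prop :=
  forall u v w, u \in A -> v \in A -> w \in A ->
    mul (mul u v) w = mul u (mul v w).

(* V_x = span{x, 1 - x}; for x = 0 or 1 this is span{1} *)
Definition Vx (one x : 'rV[R]_n) : {vspace 'rV[R]_n} := (<[x]> + <[one - x]>)%VS.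

Definition trivial_assoc (one : 'rV[R]_n) (A : {vspace 'rV[R]_n}) : Prop :=
  exists x, is_idempotent x /\ A = Vx one x.

Definition NS_claim : Prop :=
  exists one : 'rV[R]_n, is_identity one /\
    (decomposable one /\ forall x, decomposable x -> x = one) /\
    (forall A, is_subalgebra one A -> is_associative_on A -> trivial_assoc one A).

End Generic.

Section NortonSakuma.
Variable R : realType.

Definition bvec (m : nat) (k : nat) : 'rV[R]_m.+1 := delta_mx 0 (inord k).

(* V_2A and V_3C: basis a_0,a_1,a_2 ; a_i a_j = c (a_i + a_j - a_k) *)
Definition tab_ac (c : R) (i j : 'I_3) : 'rV[R]_3 :=
  if i == j then bvec 2 i
  else c *: (bvec 2 i + bvec 2 j - bvec 2 (3 - (i + j))).

Definition mul2A := tabmul (tab_ac (1/8)).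
Definition mul3C := tabmul (tab_ac (1/64)).

(* V_3A: basis a_0,a_1,a_2,u with u the basis vector of index 3 *)
Definition tab3A (i j : 'I_4) : 'rV[R]_4 :=
  let a := nat_of_ord i in let b := nat_of_ord j in
  if (a < 3)%N && (b < 3)%N then
    (if a == b then bvec 3 a
     else (1/32) *: (2 *: bvec 3 a + 2 *: bvec 3 b + bvec 3 (3 - (a + b)))
          - (135 / 2 ^+ 11) *: bvec 3 3)
  else if (a == 3%N) && (b == 3%N) then bvec 3 3
  else let c := if a == 3%N then b else a in
       (1/9) *: (2 *: bvec 3 c - bvec 3 ((c + 1) %% 3) - bvec 3 ((c + 2) %% 3))
       + (5/32) *: bvec 3 3.

Definition mul3A := tabmul tab3A.

End NortonSakuma.

(* Each of the three algebras is commutative with identity, and it carries a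
   linear form [tr] with [tr (u u) > 0] for [u <> 0].  Positivity gives square
   roots: if [y^2] lies in [span (e, y)] for an idempotent [e] acting trivially
   on [y], completing the square splits [e] into two orthogonal idempotents;
   and a real cubic has a root, so in [span (1, v, v^2)] multiplication by [v]
   has a real eigenvector, which rescales to an idempotent.  Hence an
   associative unital subalgebra of dimension 2 is some [V_x], while one of
   dimension 3 would contain a decomposable idempotent [e <> 1]; dimension 4
   only occurs for [V_3A], which is not associative.
   Solving [x^2 = x] in coordinates shows that a nonzero idempotent has trace
   [1] or at least [b] ([b = 1] for 2A and 3C, [b = 8/5] for 3A), and that only
   the identity has trace [2] or at least [1 + b]; a sum of two or more nonzero
   idempotents has one of these traces, so it is the identity. *)

From HB Require Import structures.
From mathcomp Require Import all_boot all_order all_algebra.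
From mathcomp Require Import reals polyrcf.
From mathcomp Require Import ring lra.
Set Implicit Arguments. Unset Strict Implicit. Unset Printing Implicit Defensive.
Import Order.TTheory GRing.Theory Num.Theory.
Local Open Scope ring_scope.

Lemma monic_cubic_has_root (R : rcfType) (a b c : R) :
  exists x : R, x ^+ 3 = c * x ^+ 2 + b * x + a.
Proof.
pose p : {poly R} := 'X^3 - (c *: 'X^2 + b *: 'X + a%:P).
have [|x] := @odd_poly_root R p.
  rewrite size_polyDl size_polyXn // size_polyN.
  apply: leq_ltn_trans (size_polyD _ _) _.
  rewrite gtn_max (leq_ltn_trans (size_polyC_leq1 _)) // andbT.
  apply: leq_ltn_trans (size_polyD _ _) _; rewrite gtn_max.
  by rewrite !(leq_ltn_trans (size_scale_leq _ _)) ?size_polyXn ?size_polyX.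
by rewrite /root !hornerE subr_eq0 => /eqP h; exists x; rewrite h expr2 mulrA.
Qed.

Section VspaceFacts.
Variables (K : fieldType) (vT : vectType K).
Implicit Types (U W : {vspace vT}) (x : vT).

Lemma dimv_add_line W x : x \notin W -> \dim (W + <[x]>) = (\dim W).+1.
Proof.
move=> xW; have x0 : x != 0 by apply: contraNneq xW => ->; rewrite mem0v.
rewrite dimv_disjoint_sum ?dim_vline ?x0 ?addn1 //.
apply/eqP; rewrite -subv0; apply/subvP => y /memv_capP[yW /vlineP[k yk]].
rewrite memv0; apply/eqP; rewrite yk; have [->|k0] := eqVneq k 0; first by rewrite scale0r.
by case/negP: xW; rewrite -[x](scalerK k0) -yk memvZ.
Qed.

Lemma exists_notin_subspace U W :
  (\dim W < \dim U)%N -> exists2 x, x \in U & x \notin W.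
Proof. by move=> ltWU; apply/subvPn; apply: contraL ltWU => /dimvS; rewrite -leqNgt. Qed.

End VspaceFacts.

Section CommutativeAlgebra.
Variables (R : rcfType) (n : nat).
Local Notation V := 'rV[R]_n.
Variables (mul : V -> V -> V) (one : V) (tr : V -> R).
Hypothesis amulDl : forall u v w, mul (u + v) w = mul u w + mul v w.
Hypothesis amulZl : forall a u w, mul (a *: u) w = a *: mul u w.
Hypothesis amulC : forall u v, mul u v = mul v u.
Hypothesis amul1l : forall u, mul one u = u.
Hypothesis trD : forall u v, tr (u + v) = tr u + tr v.
Hypothesis trZ : forall a u, tr (a *: u) = a * tr u.
Hypothesis tr_sqr_gt0 : forall u, u != 0 -> 0 < tr (mul u u).
Hypothesis one_neq0 : one != 0.

Lemma amulDr u v w : mul u (v + w) = mul u v + mul u w.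
Proof. by rewrite amulC amulDl !(amulC u). Qed.
Lemma amulZr a u w : mul u (a *: w) = a *: mul u w.
Proof. by rewrite amulC amulZl amulC. Qed.
Lemma amulNl u w : mul (- u) w = - mul u w.
Proof. by rewrite -scaleN1r amulZl scaleN1r. Qed.
Lemma amulNr u w : mul u (- w) = - mul u w.
Proof. by rewrite -scaleN1r amulZr scaleN1r. Qed.
Lemma amul0l w : mul 0 w = 0.
Proof. by have := amulZl 0 0 w; rewrite !scale0r. Qed.
Lemma amul0r w : mul w 0 = 0.
Proof. by rewrite amulC amul0l. Qed.
Lemma amul1r u : mul u one = u.
Proof. by rewrite amulC amul1l. Qed.
Lemma tr0 : tr 0 = 0.
Proof. by have := trZ 0 0; rewrite scale0r mul0r. Qed.

Ltac expand :=
  rewrite ?(amulDl, amulDr, amulZl, amulZr, amulNl, amulNr, amul0l, amul0r, amul1l, amul1r).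
Ltac coord_ring := apply/rowP => ?; rewrite !mxE; ring.
Ltac coord_field := apply/rowP => ?; rewrite !mxE; field.

Lemma idempotent_complement e : mul e e = e -> mul (one - e) (one - e) = one - e.
Proof. by move=> ee; expand; rewrite ee; coord_ring. Qed.

Lemma idempotent_orthogonal e : mul e e = e -> mul (one - e) e = 0.
Proof. by move=> ee; expand; rewrite ee subrr. Qed.

(* Completing the square, [w := y - (b/2) e] satisfies [w^2 = d e] with
   [d = a + b^2/4]; positivity of the trace forces [d > 0], and then
   [g := (e + w / sqrt d) / 2] is idempotent. *)
Lemma idempotent_split e y a b :
  mul e e = e -> mul e y = y -> mul y y = a *: e + b *: y -> y \notin <[e]>%VS ->
  exists g, [/\ mul g g = g, mul e g = g, g \in (<[e]> + <[y]>)%VS,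
               y \in (<[g]> + <[e - g]>)%VS & (g != 0) && (g != e)].
Proof.
move=> ee ey yy ny.
have e0 : e != 0.
  by apply: contraNneq ny => e0; move: ey; rewrite e0 amul0l => <-; rewrite mem0v.
pose w := y - (b / 2) *: e.
have wE : w = y - (b / 2) *: e by [].
clearbody w.
have ew : mul e w = w by rewrite wE; expand; rewrite ey ee.
have ww : mul w w = (a + b ^+ 2 / 4) *: e.
  by rewrite wE; expand; rewrite ee ey yy (amulC y e) ey; coord_field.
have w0 : w != 0.
  apply: contraNneq ny => /eqP; rewrite wE subr_eq0 => /eqP ->.
  by rewrite memvZ ?memv_line.
have disc_gt0 : 0 < a + b ^+ 2 / 4.
  by have := tr_sqr_gt0 w0; rewrite ww trZ -ee pmulr_lgt0 // tr_sqr_gt0.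
pose s := Num.sqrt (a + b ^+ 2 / 4).
have s0 : s != 0 by rewrite gt_eqF ?sqrtr_gt0.
have s2 : s ^+ 2 = a + b ^+ 2 / 4 by rewrite sqr_sqrtr // ltW.
pose g := (1 / 2) *: (e + s^-1 *: w).
have gE : g = (1 / 2) *: (e + s^-1 *: w) by [].
clearbody g.
have eg : mul e g = g by rewrite gE; expand; rewrite ee ew.
have yg : y = (2 * s) *: g + (b / 2 - s) *: e by rewrite gE wE; coord_field.
exists g; split => //.
- by rewrite gE; expand; rewrite ee ew (amulC w e) ew ww -s2; coord_field.
- apply/memv_addP; exists ((1/2 - s^-1 * b / 4) *: e); first by rewrite memvZ ?memv_line.
  exists ((s^-1 / 2) *: y); first by rewrite memvZ ?memv_line.
  by rewrite gE wE; coord_field.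
- apply/memv_addP; exists ((s + b / 2) *: g); first by rewrite memvZ ?memv_line.
  exists ((b / 2 - s) *: (e - g)); first by rewrite memvZ ?memv_line.
  by rewrite {1}yg; coord_ring.
- apply/andP; split; apply: contraNneq ny => eq_g.
  + by rewrite yg eq_g scaler0 add0r memvZ ?memv_line.
  + by rewrite yg eq_g -scalerDl memvZ ?memv_line.
Qed.

Lemma dim_line_one : \dim <[one]> = 1%N.
Proof. by rewrite dim_vline one_neq0. Qed.

Lemma subalgebra_dim1_trivial A :
  is_subalgebra mul one A -> \dim A = 1%N -> trivial_assoc mul one A.
Proof.
case=> oneA _ dimA; exists one; split; first exact: amul1l.
apply/esym/eqP; rewrite eqEdim subv_add -!memvE oneA subrr mem0v dimA /=.
by apply: leq_trans (dimvS (addvSl <[one]>%VS _)); rewrite dim_line_one.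
Qed.

Lemma subalgebra_dim2_trivial A :
  is_subalgebra mul one A -> \dim A = 2%N -> trivial_assoc mul one A.
Proof.
case=> oneA clos dimA.
have [v vA vn] : exists2 v, v \in A & v \notin <[one]>%VS.
  by apply: exists_notin_subspace; rewrite dim_line_one dimA.
have defA : (<[one]> + <[v]>)%VS = A.
  apply/eqP; rewrite eqEdim subv_add -!memvE oneA vA.
  by rewrite dimv_add_line // dim_line_one dimA.
have : mul v v \in A by rewrite clos.
rewrite -{1}defA => /memv_addP[_ /vlineP[a ->] [_ /vlineP[b ->] vv]].
have [g [gg _ gA vg _]] := idempotent_split (amul1l one) (amul1l v) vv vn.
exists g; split => //; apply/esym/eqP; rewrite eqEdim subv_add -!memvE.
rewrite defA in gA; rewrite gA memvB //= -defA; apply: dimvS.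
rewrite subv_add -!memvE vg andbT.
by have := memv_add (memv_line (one - g)) (memv_line g); rewrite subrK addvC.
Qed.

Section AssociativeDim3.
Variable A : {vspace V}.
Hypothesis subA : is_subalgebra mul one A.
Hypothesis assocA : is_associative_on mul A.
Hypothesis dimA : \dim A = 3%N.

Let oneA : one \in A. Proof. by case: subA. Qed.
Let mulA u v : u \in A -> v \in A -> mul u v \in A. Proof. by case: subA => _; apply. Qed.

(* [A] splits as [e A + (1 - e) A]; if [y] spans [e A] modulo [e], then
   [<[e]> + <[y]>] is a two-dimensional unital algebra with identity [e]. *)
Lemma corner_decomposable e y : e \in A -> mul e e = e -> e != 0 -> e != one ->
  y \in A -> mul e y = y -> mul (one - e) y = 0 -> y \notin <[e]>%VS ->
  decomposable mul e.
Proof.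
move=> eA ee e0 e1 yA ey fy ny.
have fA : one - e \in A by rewrite memvB.
have f0 : one - e != 0 by rewrite subr_eq0 eq_sym.
move: (one - e) fA f0 fy (idempotent_orthogonal ee) (idempotent_complement ee).
move=> f fA f0 fy fe ff.
have nf : f \notin (<[e]> + <[y]>)%VS.
  apply: contra f0 => /memv_addP[_ /vlineP[a ->] [_ /vlineP[b ->] fab]].
  by rewrite -ff {2}fab; expand; rewrite fe fy !scaler0 addr0.
have defA : (<[e]> + <[y]> + <[f]>)%VS = A.
  apply/eqP; rewrite eqEdim !subv_add -!memvE eA yA fA.
  by rewrite dimA !dimv_add_line // dim_vline e0.
have : mul y y \in A by rewrite mulA.
rewrite -{1}defA => /memv_addP[_ /memv_addP[_ /vlineP[a ->] [_ /vlineP[b ->] ->]]].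
case=> _ /vlineP[c ->] yy.
have c0 : c = 0.
  have : mul f (mul y y) = 0 by rewrite -assocA // fy amul0l.
  rewrite yy; expand; rewrite fe fy ff !scaler0 !add0r => /eqP.
  by rewrite scaler_eq0 (negbTE f0) orbF => /eqP.
rewrite c0 scale0r addr0 in yy.
have [g [gg eg _ _ /andP[g0 ge]]] := idempotent_split ee ey yy ny.
split => //; exists [:: g; e - g]; split => //; split.
  move=> z; rewrite !inE => /orP[] /eqP ->; split => //; first by rewrite subr_eq0 eq_sym.
  by rewrite /is_idempotent; expand; rewrite ee eg (amulC g e) eg gg; coord_ring.
by rewrite !big_cons big_nil addr0 addrCA subrr addr0.
Qed.

(* Either [v^2] lies in [<[1]> + <[v]>] and the quadratic case applies, or
   [1, v, v^2] is a basis and a real eigenvector of multiplication by [v]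
   (which exists as [v^3] satisfies a real cubic) rescales to an idempotent. *)
Lemma exists_proper_idempotent :
  exists e, [/\ e \in A, mul e e = e, e != 0 & e != one].
Proof.
have [v vA vn] : exists2 v, v \in A & v \notin <[one]>%VS.
  by apply: exists_notin_subspace; rewrite dim_line_one dimA.
have [vvW|vvW] := boolP (mul v v \in (<[one]> + <[v]>)%VS).
  case/memv_addP: vvW => _ /vlineP[a ->] [_ /vlineP[b ->] vv].
  have [g [gg _ gW _ /andP[g0 g1]]] := idempotent_split (amul1l one) (amul1l v) vv vn.
  exists g; split => //; move: gW; apply/subvP.
  by rewrite subv_add -!memvE oneA vA.
have vvA : mul v v \in A by apply: mulA.
have defA : (<[one]> + <[v]> + <[mul v v]>)%VS = A.
  apply/eqP; rewrite eqEdim !subv_add -!memvE oneA vA vvA.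
  by rewrite dimA !dimv_add_line // dim_line_one.
have : mul v (mul v v) \in A by rewrite mulA.
rewrite -{1}defA => /memv_addP[_ /memv_addP[_ /vlineP[a ->] [_ /vlineP[b ->] ->]]].
case=> _ /vlineP[c ->] v3.
have [la la_root] := monic_cubic_has_root a b c.
pose y := mul v v + (la - c) *: v + (la * (la - c) - b) *: one.
have yE : y = mul v v + (la - c) *: v + (la * (la - c) - b) *: one by [].
clearbody y.
have yA : y \in A by rewrite yE !rpredD ?rpredZ // mulA.
have ny : y \notin <[one]>%VS.
  apply: contra vvW => /vlineP[k yk].
  have -> : mul v v = (k - la * (la - c) + b) *: one + (c - la) *: v.
    by rewrite -[mul v v](addrK ((la - c) *: v + (la * (la - c) - b) *: one)) addrA -yE yk;
      coord_ring.
  by rewrite memv_add // memvZ // memv_line.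
have y0 : y != 0 by apply: contraNneq ny => ->; rewrite mem0v.
have vy : mul v y = la *: y.
  have ha : a = la ^+ 3 - c * la ^+ 2 - b * la by rewrite la_root; ring.
  by rewrite yE; expand; rewrite v3 ha; coord_ring.
pose mu := la ^+ 2 + (la - c) * la + (la * (la - c) - b).
have yy : mul y y = mu *: y.
  by rewrite {1}yE; expand; rewrite assocA // vy amulZr !vy /mu; coord_ring.
have mu0 : mu != 0.
  by apply: contraTneq (tr_sqr_gt0 y0) => mu0; rewrite yy mu0 scale0r tr0 ltxx.
exists (mu^-1 *: y); split.
- by rewrite memvZ.
- by rewrite amulZl amulZr yy !scalerA divfK.
- by rewrite scaler_eq0 invr_eq0 negb_or mu0.
- apply: contra ny => /eqP hy.
  by rewrite -[y](scalerK (invr_neq0 mu0)) hy memvZ ?memv_line.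
Qed.

Lemma assoc_dim3_decomposable : exists2 e, decomposable mul e & e != one.
Proof.
have [e [eA ee e0 e1]] := exists_proper_idempotent.
have fe : mul (one - e) e = 0 := idempotent_orthogonal ee.
have ff : mul (one - e) (one - e) = one - e := idempotent_complement ee.
pose f := one - e; have fE : f = one - e by []; clearbody f; rewrite -fE in fe ff.
have fA : f \in A by rewrite fE memvB.
have f0 : f != 0 by rewrite fE subr_eq0 eq_sym.
have ef : one - f = e by rewrite fE opprB addrC subrK.
have f1 : f != one by apply: contraNneq e0 => f1; rewrite -ef f1 subrr.
have [z zA zn] : exists2 z, z \in A & z \notin (<[e]> + <[f]>)%VS.
  apply: exists_notin_subspace; rewrite dimA ltnS.
  by apply: leq_trans (dimv_add_leqif _ _).1 _; rewrite !dim_vline e0 f0.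
have zE : z = mul e z + mul f z by rewrite fE -amulDl subrKC amul1l.
have [ezn|] := boolP (mul e z \notin <[e]>%VS).
  exists e => //; apply: (corner_decomposable eA ee e0 e1 (mulA eA zA)) => //.
  - by rewrite -assocA // ee.
  - by rewrite -fE -assocA // fe amul0l.
rewrite negbK => /vlineP[k ez].
have [fzn|] := boolP (mul f z \notin <[f]>%VS).
  exists f => //; apply: (corner_decomposable fA ff f0 f1 (mulA fA zA)) => //.
  - by rewrite -assocA // ff.
  - by rewrite ef -assocA // (amulC e f) fe amul0l.
rewrite negbK => /vlineP[k' fz].
by case/negP: zn; rewrite zE ez fz memv_add // memvZ // memv_line.
Qed.

End AssociativeDim3.

Section TraceGap.
Variable b : R.
Hypothesis b_ge1 : 1 <= b.
Hypothesis b_le2 : b <= 2.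
Hypothesis tr_idem_gap : forall y, mul y y = y -> y != 0 -> tr y = 1 \/ b <= tr y.
Hypothesis tr_idem_eq_one :
  forall x, mul x x = x -> tr x = 2 \/ 1 + b <= tr x -> x = one.

Lemma decomposable_eq_one x : decomposable mul x -> x = one.
Proof.
case=> xx [s [size_s [s_idem xE]]]; apply: tr_idem_eq_one => //.
(* [lra] ignores section hypotheses, hence the local copies. *)
have b1 := b_ge1; have b2 := b_le2.
have tr_ge1 y : y \in s -> 1 <= tr y.
  move=> /s_idem[y0 yy]; have [->|] := tr_idem_gap yy y0; first by [].
  exact: le_trans.
rewrite {}xE (big_morph tr trD tr0).
case: s size_s s_idem tr_ge1 => [|y1 [|y2 s]] // _ s_idem tr_ge1; rewrite !big_cons.
case: s s_idem tr_ge1 => [|y3 s] s_idem tr_ge1.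
  have [y1_0 y1y1] := s_idem y1 (mem_head _ _).
  have [y2_0 y2y2] : y2 != 0 /\ mul y2 y2 = y2 by apply: s_idem; rewrite !inE eqxx orbT.
  rewrite big_nil addr0.
  move: (tr_idem_gap y1y1 y1_0) (tr_idem_gap y2y2 y2_0).
  by move: (tr y1) (tr y2) => t1 t2 [->|?] [->|?]; first [left; lra | right; lra].
have rest : 0 <= \sum_(y <- s) tr y.
  rewrite big_seq; apply: sumr_ge0 => y ys.
  by apply: le_trans ler01 (tr_ge1 _ _); rewrite !inE ys !orbT.
have := tr_ge1 y1; have := tr_ge1 y2; have := tr_ge1 y3; rewrite !inE !eqxx !orbT.
rewrite big_cons; move: (tr y1) (tr y2) (tr y3) (\sum_(_ <- _) _) rest.
by move=> t1 t2 t3 t *; right; lra.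
Qed.

Hypothesis one_decomposable : decomposable mul one.
Hypothesis large_nonassociative :
  forall A : {vspace V}, (4 <= \dim A)%N -> ~ is_associative_on mul A.

Lemma NS_claim_of_trace_gap : NS_claim mul.
Proof.
exists one; split; first by move=> x; rewrite amul1l amul1r.
split; first by split => //; apply: decomposable_eq_one.
move=> A subA assocA; have [oneA _] := subA.
have : (\dim <[one]> <= \dim A)%N by apply: dimvS; rewrite -memvE.
rewrite dim_line_one.
case dimA: (\dim A) => [//|[|[|[|m]]]] _.
- exact: subalgebra_dim1_trivial.
- exact: subalgebra_dim2_trivial.
- have [e /decomposable_eq_one] := assoc_dim3_decomposable subA assocA dimA.
  by move=> ->; rewrite eqxx.
- by case: (large_nonassociative (A := A)); rewrite ?dimA.
Qed.

End TraceGap.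

End CommutativeAlgebra.

Section TableProduct.
Variables (R : fieldType) (n : nat) (T : 'I_n -> 'I_n -> 'rV[R]_n).

Lemma tabmulDl u v w : tabmul T (u + v) w = tabmul T u w + tabmul T v w.
Proof.
rewrite /tabmul -big_split; apply: eq_bigr => i _; rewrite -big_split.
by apply: eq_bigr => j _; rewrite mxE mulrDl scalerDl.
Qed.

Lemma tabmulZl a u w : tabmul T (a *: u) w = a *: tabmul T u w.
Proof.
rewrite /tabmul scaler_sumr; apply: eq_bigr => i _; rewrite scaler_sumr.
by apply: eq_bigr => j _; rewrite mxE scalerA mulrA.
Qed.

Lemma tabmulE u v k :
  tabmul T u v 0 k = \sum_(i < n) \sum_(j < n) u 0 i * v 0 j * T i j 0 k.
Proof.
rewrite /tabmul summxE; apply: eq_bigr => i _; rewrite summxE.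
by apply: eq_bigr => j _; rewrite mxE.
Qed.

End TableProduct.

Local Notation co u i := (u 0 (inord i)).

Lemma row_inordP (R : Type) m (u v : 'rV[R]_m.+1) :
  (forall i, (i <= m)%N -> co u i = co v i) -> u = v.
Proof. by move=> uv; apply/rowP => k; rewrite -[k]inord_val uv // -ltnS. Qed.

Lemma row_inordB (R : zmodType) m (u v : 'rV[R]_m.+1) i : co (u - v) i = co u i - co v i.
Proof. by rewrite !mxE. Qed.

Lemma inord_eq m i j : (i <= m)%N -> (j <= m)%N ->
  ((inord i : 'I_m.+1) == inord j) = (i == j).
Proof. by move=> im jm; rewrite -val_eqE /= !inordK. Qed.

Lemma sum_ord3 (R : zmodType) (F : 'I_3 -> R) :
  \sum_(i < 3) F i = F (inord 0) + F (inord 1) + F (inord 2).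
Proof.
rewrite !big_ord_recl big_ord0 addr0 addrA.
by congr (F _ + F _ + F _); apply/val_inj; rewrite /= inordK.
Qed.

Lemma sum_ord4 (R : zmodType) (F : 'I_4 -> R) :
  \sum_(i < 4) F i = F (inord 0) + F (inord 1) + F (inord 2) + F (inord 3).
Proof.
rewrite !big_ord_recl big_ord0 addr0 !addrA.
by congr (F _ + F _ + F _ + F _); apply/val_inj; rewrite /= inordK.
Qed.

Lemma bvecE (R : realType) m i k : (i <= m)%N -> (k <= m)%N ->
  co (bvec R m i) k = (k == i)%:R.
Proof. by move=> im km; rewrite /bvec mxE eqxx /= inord_eq. Qed.

Lemma sum_sqr_row_gt0 (R : realDomainType) m (u : 'rV[R]_m) :
  u != 0 -> 0 < \sum_(i < m) u 0 i ^+ 2.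
Proof.
move=> u0; rewrite lt_def sumr_ge0 ?andbT => [|i _]; last exact: sqr_ge0.
rewrite psumr_eq0 => [|i _]; last exact: sqr_ge0.
apply: contra u0 => /allP u_eq0; apply/eqP/rowP => i; rewrite !mxE.
by apply/eqP; rewrite -sqrf_eq0; apply: u_eq0; rewrite mem_index_enum.
Qed.

Lemma mulr_sqr_eq_id (R : fieldType) (k p : R) :
  k != 0 -> k * p ^+ 2 = p -> p = 0 \/ p = k^-1.
Proof.
move=> k0 kpp; have /eqP : p * (k * p - 1) = 0.
  by rewrite mulrBr mulrCA -expr2 kpp mulr1 subrr.
rewrite mulf_eq0 subr_eq0 => /orP[/eqP|/eqP kp1]; [by left | right].
by apply: (mulfI k0); rewrite kp1 mulfV.
Qed.

Section TwoAxisFamily.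
Variables (R : realType) (c : R).
Hypothesis c_gt0 : 0 < c.
Hypothesis c_lt : 4 * c < 1.

Local Notation mulc := (tabmul (tab_ac c)).
Let kappa := (1 + 2 * c)^-1.

Ltac ac_simp := rewrite tabmulE !sum_ord3 /tab_ac !inord_eq //= !inordK //= !mxE /=
  !inord_eq //= ?mulr1n ?mulr0n.

Lemma ac_mulE0 u v : co (mulc u v) 0 = co u 0 * co v 0
  + c * (co u 0 * co v 1 + co u 1 * co v 0) + c * (co u 0 * co v 2 + co u 2 * co v 0)
  - c * (co u 1 * co v 2 + co u 2 * co v 1).
Proof. by ac_simp; ring. Qed.

Lemma ac_mulE1 u v : co (mulc u v) 1 = co u 1 * co v 1
  + c * (co u 1 * co v 0 + co u 0 * co v 1) + c * (co u 1 * co v 2 + co u 2 * co v 1)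
  - c * (co u 0 * co v 2 + co u 2 * co v 0).
Proof. by ac_simp; ring. Qed.

Lemma ac_mulE2 u v : co (mulc u v) 2 = co u 2 * co v 2
  + c * (co u 2 * co v 0 + co u 0 * co v 2) + c * (co u 2 * co v 1 + co u 1 * co v 2)
  - c * (co u 0 * co v 1 + co u 1 * co v 0).
Proof. by ac_simp; ring. Qed.

Let c2_gt0 : 0 < 1 + 2 * c. Proof. by have := c_gt0; lra. Qed.
Let c2_neq0 : 1 + 2 * c != 0. Proof. by rewrite gt_eqF. Qed.
Let c4_neq1 : 4 * c != 1. Proof. by rewrite lt_eqF. Qed.
Let kappa_ge : 2 / 3 <= kappa.
Proof. by rewrite /kappa -[2 / 3]invf_div lef_pV2 ?posrE //; have := c_lt; lra. Qed.
Let kappa_lt1 : kappa < 1.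
Proof. by rewrite /kappa invf_lt1 //; have := c_gt0; lra. Qed.

Definition ac_idem_eq p q r := p ^+ 2 + 2 * c * (p * q + p * r - q * r) - p.

Lemma ac_idem_eq_diag x z : ac_idem_eq x x z = 0 -> x = 0 \/ x = kappa.
Proof.
move=> hx; apply: mulr_sqr_eq_id => //; apply/eqP; rewrite -subr_eq0 -hx.
by rewrite /ac_idem_eq; apply/eqP; ring.
Qed.

Lemma ac_idem_eq_pair x z : ac_idem_eq x x z = 0 -> x + z + 4 * c * x - 1 = 0 ->
  x + x + z = 1 \/ x + x + z = 3 * kappa - 1.
Proof.
move=> hx hxz; have -> : z = 1 - x - 4 * c * x by rewrite -[z]subr0 -hxz; ring.
by case: (ac_idem_eq_diag hx) => ->; [left; ring | right; rewrite /kappa; field].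
Qed.

Lemma ac_idem_eqC p q r : ac_idem_eq p q r = ac_idem_eq p r q.
Proof. by rewrite /ac_idem_eq; ring. Qed.

(* The difference of the equations for [p] and [q] is [(p - q) (p + q + 4 c r - 1)]. *)
Lemma ac_idem_eq_solutions p q r :
  ac_idem_eq p q r = 0 -> ac_idem_eq q p r = 0 -> ac_idem_eq r p q = 0 ->
  [\/ [/\ p = 0, q = 0 & r = 0], [/\ p = kappa, q = kappa & r = kappa],
       p + q + r = 1 | p + q + r = 3 * kappa - 1].
Proof.
have split_diff x y u : ac_idem_eq x y u = 0 -> ac_idem_eq y x u = 0 ->
    x = y \/ x + y + 4 * c * u - 1 = 0.
  move=> hx hy; have /eqP : (x - y) * (x + y + 4 * c * u - 1) = 0.
    by rewrite -[RHS](subrr 0) -{1}hx -hy /ac_idem_eq; ring.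
  by rewrite mulf_eq0 subr_eq0 => /orP[/eqP|/eqP]; [left | right].
move=> hp hq hr; have hp' := etrans (ac_idem_eqC _ _ _) hp.
have [epq|l01] := split_diff p q r hp hq.
  subst q; have [epr|l02] := split_diff p r p hp' hr; last first.
    by case: (ac_idem_eq_pair hp l02) => ?; [constructor 3 | constructor 4].
  by subst r; case: (ac_idem_eq_diag hp) => ->; [constructor 1 | constructor 2].
have [epr|l02] := split_diff p r q hp' hr.
  subst r; rewrite addrAC.
  by case: (ac_idem_eq_pair hp' l01) => ?; [constructor 3 | constructor 4].
have /eqP : (q - r) * (1 - 4 * c) = 0.
  by rewrite -[RHS](subrr 0) -{1}l01 -l02; ring.
rewrite mulf_eq0 subr_eq0 [1 - _ == 0]subr_eq0 [1 == _]eq_sym (negbTE c4_neq1) orbF => /eqP eqr.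
subst r; rewrite [p + q]addrC in l01; rewrite -addrA addrC.
have hq' := etrans (ac_idem_eqC _ _ _) hq.
by case: (ac_idem_eq_pair hq' l01) => ?; [constructor 3 | constructor 4].
Qed.

Definition ac_one : 'rV[R]_3 := kappa *: (bvec R 2 0 + bvec R 2 1 + bvec R 2 2).
Definition ac_tr (u : 'rV[R]_3) := co u 0 + co u 1 + co u 2.

Lemma ac_oneE i : (i <= 2)%N -> co ac_one i = kappa.
Proof.
by case: i => [|[|[|//]]] _; rewrite /ac_one !mxE /= !inord_eq //= ?mulr1n ?mulr0n; ring.
Qed.

Ltac coord3 := apply: row_inordP => -[|[|[|//]]] _;
  rewrite ?ac_mulE0 ?ac_mulE1 ?ac_mulE2 ?row_inordB ?ac_oneE ?bvecE ?mxE //=.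

Lemma ac_mulC u v : mulc u v = mulc v u.
Proof. by coord3; ring. Qed.

Lemma ac_mul1 u : mulc ac_one u = u.
Proof. by coord3; rewrite /kappa; field. Qed.

Lemma ac_trD u v : ac_tr (u + v) = ac_tr u + ac_tr v.
Proof. by rewrite /ac_tr !mxE; ring. Qed.

Lemma ac_trZ a u : ac_tr (a *: u) = a * ac_tr u.
Proof. by rewrite /ac_tr !mxE; ring. Qed.

Lemma ac_tr_sqr_gt0 u : u != 0 -> 0 < ac_tr (mulc u u).
Proof.
move=> /sum_sqr_row_gt0; rewrite sum_ord3 /ac_tr ac_mulE0 ac_mulE1 ac_mulE2.
move: (co u 0) (co u 1) (co u 2) => p q r sq_gt0.
rewrite [X in 0 < X](_ : _ = (1 - c) * (p ^+ 2 + q ^+ 2 + r ^+ 2) + c * (p + q + r) ^+ 2).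
  apply: ltr_wpDr; first by rewrite mulr_ge0 ?sqr_ge0 ?ltW.
  by rewrite mulr_gt0 // subr_gt0; have := c_lt; have := c_gt0; lra.
by ring.
Qed.

Lemma ac_idempotent x : mulc x x = x ->
  [\/ x = 0, x = ac_one, ac_tr x = 1 | ac_tr x = 3 * kappa - 1].
Proof.
move=> xx; have coord_eq i : co (mulc x x) i - co x i = 0 by rewrite xx subrr.
have := coord_eq 0%N; have := coord_eq 1%N; have := coord_eq 2%N.
rewrite ac_mulE0 ac_mulE1 ac_mulE2 /ac_tr => h2 h1 h0.
have hp : ac_idem_eq (co x 0) (co x 1) (co x 2) = 0 by rewrite -h0 /ac_idem_eq; ring.
have hq : ac_idem_eq (co x 1) (co x 0) (co x 2) = 0 by rewrite -h1 /ac_idem_eq; ring.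
have hr : ac_idem_eq (co x 2) (co x 0) (co x 1) = 0 by rewrite -h2 /ac_idem_eq; ring.
have [[e0 e1 e2]|[e0 e1 e2]|->|->] := ac_idem_eq_solutions hp hq hr.
- by constructor 1; coord3; rewrite ?e0 ?e1 ?e2.
- by constructor 2; coord3; rewrite ?e0 ?e1 ?e2.
- by constructor 3.
- by constructor 4.
Qed.

Lemma ac_tr_one : ac_tr ac_one = 3 * kappa.
Proof. by rewrite /ac_tr !ac_oneE //; ring. Qed.

Lemma ac_one_neq0 : ac_one != 0.
Proof.
apply/eqP => /(congr1 (fun u : 'rV[R]_3 => co u 0)); rewrite ac_oneE // mxE.
by apply/eqP; rewrite invr_eq0.
Qed.

Lemma ac_one_decomposable : decomposable mulc ac_one.
Proof.
split; first exact: ac_mul1.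
exists [:: bvec R 2 0; ac_one - bvec R 2 0]; split => //; split; last first.
  by rewrite !big_cons big_nil addr0 addrCA subrr addr0.
move=> z; rewrite !inE => /orP[] /eqP -> {z}; split.
- apply/eqP => /(congr1 (fun u : 'rV[R]_3 => co u 0)); rewrite bvecE // mxE.
  by apply/eqP; rewrite oner_eq0.
- by rewrite /is_idempotent; coord3; ring.
- apply/eqP => /(congr1 (fun u : 'rV[R]_3 => co u 1)).
  by rewrite row_inordB ac_oneE // bvecE //= subr0 mxE; apply/eqP; rewrite invr_eq0.
- by rewrite /is_idempotent; coord3; rewrite /kappa; field.
Qed.

Lemma ac_NS_claim : NS_claim mulc.
Proof.
have dim_le3 (A : {vspace 'rV[R]_3}) : (\dim A <= 3)%N.
  by have := dimvS (subvf A); rewrite dimvf dim_matrix.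
apply: (NS_claim_of_trace_gap (tabmulDl _) (tabmulZl _) ac_mulC ac_mul1 ac_trD ac_trZ
  ac_tr_sqr_gt0 ac_one_neq0 (b := 1)) => //; first lra.
- move=> y yy y0; right; case: (ac_idempotent yy) => [y_eq0|->|->|->] //.
  + by rewrite y_eq0 eqxx in y0.
  + by rewrite ac_tr_one; have := kappa_ge; lra.
  + by have := kappa_ge; lra.
- move=> x xx tr_x; case: (ac_idempotent xx) => [x_eq0|//|tr1|tr2]; exfalso;
    have := kappa_lt1; move: tr_x; rewrite ?x_eq0 ?tr1 ?tr2 /ac_tr ?mxE; lra.
- exact: ac_one_decomposable.
- by move=> A; rewrite leqNgt ltnS dim_le3.
Qed.

End TwoAxisFamily.

Lemma NS_claim2A (R : realType) : NS_claim (@mul2A R).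
Proof. by apply: ac_NS_claim; lra. Qed.

Lemma NS_claim3C (R : realType) : NS_claim (@mul3C R).
Proof. by apply: ac_NS_claim; lra. Qed.

Section ThreeAIdempotentEquations.
Variable R : realFieldType.
Implicit Types p q r s x z : R.

(* [a3_eq_a p q r s = 0] and [a3_eq_u p q r s = 0] say that the [a_0]- and
   [u]-coordinates of [x^2] and [x] agree, where [x] has coordinates [p, q, r, s]. *)
Definition a3_eq_a p q r s :=
  144 * p ^+ 2 + 18 * p * q + 18 * p * r + 9 * q * r + 32 * s * (2 * p - q - r) - 144 * p.
Definition a3_eq_u p q r s :=
  1024 * s ^+ 2 - 135 * (p * q + p * r + q * r) + 320 * s * (p + q + r) - 1024 * s.
Definition a3_eq_diff p q r s := 48 * p + 48 * q + 3 * r + 32 * s - 48.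

Definition a3_tr_values : seq R := [:: 1; 8/5; 12/7; 81/35].

Lemma a3_eq_aC p q r s : a3_eq_a p q r s = a3_eq_a p r q s.
Proof. by rewrite /a3_eq_a; ring. Qed.

Lemma natr_mul_eq0 (k : nat) x : k%:R * x = 0 -> (0 < k)%N -> x = 0.
Proof. by move=> /eqP + k_gt0; rewrite mulf_eq0 pnatr_eq0 eqn0Ngt k_gt0 => /eqP. Qed.

Lemma comb3_eq0 (P a b c e1 e2 e3 : R) :
  e1 = 0 -> e2 = 0 -> e3 = 0 -> P = a * e1 + b * e2 + c * e3 -> P = 0.
Proof. by move=> -> -> -> ->; rewrite !mulr0 !addr0. Qed.

Lemma comb4_eq0 (P a b c d e1 e2 e3 e4 : R) :
  e1 = 0 -> e2 = 0 -> e3 = 0 -> e4 = 0 -> P = a * e1 + b * e2 + c * e3 + d * e4 -> P = 0.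
Proof. by move=> -> -> -> -> ->; rewrite !mulr0 !addr0. Qed.

(* The three identities are certificates that [x (9x - 8) (63x + 8) (21x - 16)],
   and [s] and [z] minus explicit cubics in [x], lie in the ideal generated by
   the four equations.  Large constants are sums of small numerals since a
   numeral [n : R] is [n%:R] with a unary [n]. *)
Lemma a3_eq_pair x z s : a3_eq_a x x z s = 0 -> a3_eq_a z x x s = 0 ->
  a3_eq_u x x z s = 0 -> a3_eq_diff x z x s = 0 -> 2 * x + z + 8/5 * s \in a3_tr_values.
Proof.
move=> h1 h2 h3 h4.
have /natr_mul_eq0/(_ isT) hx :
    3726 * (x * (9 * x - 8) * (63 * x + 8) * (21 * x - 16)) = 0.
  apply: (comb3_eq0 h1 h2 h3 (_ : _ =
     ((273 * 1000 + 861)*x*x - (46 * 1000 + 764)*x*z - (52 * 1000 + 768)*x*s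
      - (173 * 1000 + 880)*x + (13 * 1000 + 392)*z*z + (96 * 1000 + 256)*z*s
      - (23 * 1000 + 328)*z - 3072*s*s - (14 * 1000 + 592)*s - (26 * 1000 + 496)) * _
   + ((20 * 1000 + 169)*x*z - (81 * 1000 + 24)*x*s + (18 * 1000 + 360)*x
      - (23 * 1000 + 904)*z*s - (62 * 1000 + 464)*s*s + (80 * 1000 + 128)*s) * _
   + (- 3808*x*s + 1224*x + (12 * 1000 + 96)*z*z + 3808*z*s - (10 * 1000 + 440)*z) * _)).
  by rewrite /a3_eq_a /a3_eq_u; ring.
have /natr_mul_eq0/(_ isT) hs : 180 * (2048 * s
     - (- (35 * 1000 + 721)*x*x*x + (40 * 1000 + 824)*x*x - 8640*x)) = 0.
  apply: (comb4_eq0 h1 h2 h3 h4 (_ : _ =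
     ((41 * 1000 + 40)*x - 2700*z - (11 * 1000 + 840)*s - (10 * 1000 + 800)) * _
   + (4995*x - 5920*s) * _ + (1953*x + 2394*z + 2016*s - 2304) * _
   + (- (64 * 1000 + 512)*s*s + (41 * 1000 + 472)*s) * _)).
  by rewrite /a3_eq_a /a3_eq_u /a3_eq_diff; ring.
have /natr_mul_eq0/(_ isT) hz : 540 * (1024 * z
     - ((11 * 1000 + 907)*x*x*x - (13 * 1000 + 608)*x*x + 1792*x + 1024)) = 0.
  apply: (comb4_eq0 h1 h2 h3 h4 (_ : _ =
     (- (41 * 1000 + 40)*x + 2700*z + (11 * 1000 + 840)*s + (10 * 1000 + 800)) * _
   + (- 4995*x + 5920*s) * _ + (- 1953*x - 2394*z - 2016*s + 2304) * _
   + ((64 * 1000 + 512)*s*s - (41 * 1000 + 472)*s + (11 * 1000 + 520)) * _)).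
  by rewrite /a3_eq_a /a3_eq_u /a3_eq_diff; ring.
have es : s = (- (35 * 1000 + 721)*x*x*x + (40 * 1000 + 824)*x*x - 8640*x) / 2048 by lra.
have ez : z = ((11 * 1000 + 907)*x*x*x - (13 * 1000 + 608)*x*x + 1792*x + 1024) / 1024.
  by lra.
have value v : v \in a3_tr_values -> 2 * x + z + 8/5 * s = v ->
    2 * x + z + 8/5 * s \in a3_tr_values by move=> + ->.
move/eqP: hx; rewrite !mulf_eq0 -!orbA => /or4P[] /eqP hx.
- by apply: (value 1); rewrite ?inE ?eqxx // es ez hx; field.
- apply: (value (8/5)); rewrite ?inE ?eqxx ?orbT //.
  by rewrite es ez (_ : x = 8/9); [field | lra].
- apply: (value (12/7)); rewrite ?inE ?eqxx ?orbT //.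
  by rewrite es ez (_ : x = -8/63); [field | lra].
- apply: (value (81/35)); rewrite ?inE ?eqxx ?orbT //.
  by rewrite es ez (_ : x = 16/21); [field | lra].
Qed.

Lemma a3_eq_diag x s : a3_eq_a x x x s = 0 -> a3_eq_u x x x s = 0 ->
  [\/ x = 0 /\ s = 0, x = 16/21 /\ s = 9/14 | 3 * x + 8/5 * s \in a3_tr_values].
Proof.
move=> ha hu; have /natr_mul_eq0/(_ isT)/eqP : 9 * (x * (21 * x - 16)) = 0.
  by rewrite -ha /a3_eq_a; ring.
rewrite mulf_eq0 => /orP[/eqP x0 | /eqP hx].
  have /natr_mul_eq0/(_ isT)/eqP : 1024 * (s * (s - 1)) = 0 by rewrite -hu x0 /a3_eq_u; ring.
  rewrite mulf_eq0 subr_eq0 => /orP[/eqP s0 | /eqP ->]; first by constructor 1.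
  by constructor 3; rewrite x0 mulr0 add0r mulr1 !inE eqxx orbT.
have ex : x = 16/21 by lra.
subst x.
have /natr_mul_eq0/(_ isT)/eqP : 1024 * ((s - 9/14) * (s + 5/14)) = 0.
  by rewrite -hu /a3_eq_u; field.
rewrite mulf_eq0 subr_eq0 addr_eq0 => /orP[/eqP -> | /eqP ->]; first by constructor 2.
by constructor 3; rewrite (_ : _ + _ = 12/7) ?inE ?eqxx ?orbT //; field.
Qed.

(* The difference of the equations for [p] and [q] is [3 (p - q) (a3_eq_diff p q r s)]. *)
Lemma a3_eq_solutions p q r s :
  a3_eq_a p q r s = 0 -> a3_eq_a q p r s = 0 -> a3_eq_a r p q s = 0 -> a3_eq_u p q r s = 0 ->
  [\/ [/\ p = 0, q = 0, r = 0 & s = 0], [/\ p = 16/21, q = 16/21, r = 16/21 & s = 9/14]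
     | p + q + r + 8/5 * s \in a3_tr_values].
Proof.
have split_diff x y u : a3_eq_a x y u s = 0 -> a3_eq_a y x u s = 0 ->
    x = y \/ a3_eq_diff x y u s = 0.
  move=> hx hy; have /natr_mul_eq0/(_ isT)/eqP : 3 * ((x - y) * a3_eq_diff x y u s) = 0.
    by rewrite -[RHS](subrr 0) -{1}hx -hy /a3_eq_a /a3_eq_diff; ring.
  by rewrite mulf_eq0 subr_eq0 => /orP[/eqP|/eqP]; [left | right].
move=> hp hq hr hu; have hp' := etrans (a3_eq_aC _ _ _ _) hp.
have [epq|l01] := split_diff p q r hp hq.
  subst q; have [epr|l02] := split_diff p r p hp' hr.
    subst r; rewrite (_ : p + p + p = 3 * p); last by ring.
    by case: (a3_eq_diag hp hu) => [[-> ->]|[-> ->]|?]; constructor.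
  by constructor 3; rewrite (_ : p + p = 2 * p) ?(a3_eq_pair hp hr hu l02) //; ring.
have [epr|l02] := split_diff p r q hp' hr.
  subst r; constructor 3; rewrite (_ : p + q + p = 2 * p + q); last by ring.
  by apply: a3_eq_pair => //; rewrite -hu /a3_eq_u; ring.
have /natr_mul_eq0/(_ isT)/eqP : 45 * (q - r) = 0.
  by rewrite -[RHS](subrr 0) -{1}l01 -l02 /a3_eq_diff; ring.
rewrite subr_eq0 => /eqP eqr; subst r; constructor 3.
rewrite (_ : p + q + q = 2 * q + p); last by ring.
apply: a3_eq_pair => //; first exact: etrans (a3_eq_aC _ _ _ _) hq.
  by rewrite -hu /a3_eq_u; ring.
by rewrite -l01 /a3_eq_diff; ring.
Qed.

End ThreeAIdempotentEquations.

Section ThreeA.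
Variable R : realType.
Local Notation mul := (@mul3A R).

(* [tab3A] is locked while the sums are unfolded: otherwise unification
   unfolds it and the rewrite takes minutes. *)
Ltac a3_simp := rewrite /mul3A tabmulE [tab3A]lock !sum_ord4 -lock /tab3A !inordK //=
  !mxE /= !inord_eq //= ?mulr1n ?mulr0n.

Lemma a3_mulE0 u v : co (mul u v) 0 = co u 0 * co v 0
  + 1/16 * (co u 0 * co v 1 + co u 1 * co v 0 + co u 0 * co v 2 + co u 2 * co v 0)
  + 1/32 * (co u 1 * co v 2 + co u 2 * co v 1)
  + 2/9 * (co u 0 * co v 3 + co u 3 * co v 0)
  - 1/9 * (co u 1 * co v 3 + co u 3 * co v 1 + co u 2 * co v 3 + co u 3 * co v 2).
Proof. by a3_simp; field. Qed.

Lemma a3_mulE1 u v : co (mul u v) 1 = co u 1 * co v 1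
  + 1/16 * (co u 1 * co v 0 + co u 0 * co v 1 + co u 1 * co v 2 + co u 2 * co v 1)
  + 1/32 * (co u 0 * co v 2 + co u 2 * co v 0)
  + 2/9 * (co u 1 * co v 3 + co u 3 * co v 1)
  - 1/9 * (co u 0 * co v 3 + co u 3 * co v 0 + co u 2 * co v 3 + co u 3 * co v 2).
Proof. by a3_simp; field. Qed.

Lemma a3_mulE2 u v : co (mul u v) 2 = co u 2 * co v 2
  + 1/16 * (co u 2 * co v 0 + co u 0 * co v 2 + co u 2 * co v 1 + co u 1 * co v 2)
  + 1/32 * (co u 0 * co v 1 + co u 1 * co v 0)
  + 2/9 * (co u 2 * co v 3 + co u 3 * co v 2)
  - 1/9 * (co u 0 * co v 3 + co u 3 * co v 0 + co u 1 * co v 3 + co u 3 * co v 1).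
Proof. by a3_simp; field. Qed.

Lemma a3_mulE3 u v : co (mul u v) 3 = co u 3 * co v 3
  - 135/2048 * (co u 0 * co v 1 + co u 1 * co v 0 + co u 0 * co v 2
                + co u 2 * co v 0 + co u 1 * co v 2 + co u 2 * co v 1)
  + 5/32 * (co u 0 * co v 3 + co u 3 * co v 0 + co u 1 * co v 3
            + co u 3 * co v 1 + co u 2 * co v 3 + co u 3 * co v 2).
Proof. by a3_simp; field. Qed.

Definition a3_one : 'rV[R]_4 :=
  (16/21) *: (bvec R 3 0 + bvec R 3 1 + bvec R 3 2) + (9/14) *: bvec R 3 3.
Definition a3_tr (u : 'rV[R]_4) := co u 0 + co u 1 + co u 2 + 8/5 * co u 3.

Lemma a3_oneE i : (i <= 3)%N -> co a3_one i = if i == 3%N then 9/14 else 16/21.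
Proof.
by case: i => [|[|[|[|//]]]] _; rewrite /a3_one !mxE /= !inord_eq //= ?mulr1n ?mulr0n; ring.
Qed.

Ltac coord4 := apply: row_inordP => -[|[|[|[|//]]]] _;
  rewrite ?a3_mulE0 ?a3_mulE1 ?a3_mulE2 ?a3_mulE3 ?row_inordB ?a3_oneE ?bvecE ?mxE //=.

Lemma a3_mulC u v : mul u v = mul v u.
Proof. by coord4; ring. Qed.

Lemma a3_mul1 u : mul a3_one u = u.
Proof. by coord4; field. Qed.

Lemma a3_trD u v : a3_tr (u + v) = a3_tr u + a3_tr v.
Proof. by rewrite /a3_tr !mxE; ring. Qed.

Lemma a3_trZ a u : a3_tr (a *: u) = a * a3_tr u.
Proof. by rewrite /a3_tr !mxE; ring. Qed.

Lemma a3_tr_sqr_gt0 u : u != 0 -> 0 < a3_tr (mul u u).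
Proof.
move=> /sum_sqr_row_gt0; rewrite sum_ord4 /a3_tr a3_mulE0 a3_mulE1 a3_mulE2 a3_mulE3.
move: (co u 0) (co u 1) (co u 2) (co u 3) => p q r s sq_gt0.
rewrite [X in 0 < X](_ : _ = 243/256 * (p ^+ 2 + q ^+ 2 + r ^+ 2)
   + 13/256 * (p + q + r + 64/13 * s) ^+ 2 + 24/65 * s ^+ 2); last by field.
have := sqr_ge0 (p + q + r + 64/13 * s); have := sqr_ge0 p; have := sqr_ge0 q.
have := sqr_ge0 r; lra.
Qed.

Lemma a3_idempotent x : mul x x = x ->
  [\/ x = 0, x = a3_one | a3_tr x \in a3_tr_values R].
Proof.
move=> xx; have coord_eq i : co (mul x x) i - co x i = 0 by rewrite xx subrr.
have := coord_eq 0%N; have := coord_eq 1%N; have := coord_eq 2%N; have := coord_eq 3%N.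
rewrite a3_mulE0 a3_mulE1 a3_mulE2 a3_mulE3 => h3 h2 h1 h0.
have hp : a3_eq_a (co x 0) (co x 1) (co x 2) (co x 3) = 0.
  by rewrite -(mulr0 144) -h0 /a3_eq_a; field.
have hq : a3_eq_a (co x 1) (co x 0) (co x 2) (co x 3) = 0.
  by rewrite -(mulr0 144) -h1 /a3_eq_a; field.
have hr : a3_eq_a (co x 2) (co x 0) (co x 1) (co x 3) = 0.
  by rewrite -(mulr0 144) -h2 /a3_eq_a; field.
have hu : a3_eq_u (co x 0) (co x 1) (co x 2) (co x 3) = 0.
  by rewrite -(mulr0 1024) -h3 /a3_eq_u; field.
have [[e0 e1 e2 e3]|[e0 e1 e2 e3]|] := a3_eq_solutions hp hq hr hu.
- by constructor 1; coord4; rewrite ?e0 ?e1 ?e2 ?e3.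
- by constructor 2; coord4; rewrite ?e0 ?e1 ?e2 ?e3.
- by constructor 3.
Qed.

Lemma a3_tr_one : a3_tr a3_one = 116/35.
Proof. by rewrite /a3_tr !a3_oneE //=; field. Qed.

Lemma a3_one_neq0 : a3_one != 0.
Proof.
apply/eqP => /(congr1 (fun u : 'rV[R]_4 => co u 3)); rewrite a3_oneE //= mxE.
by move=> ?; lra.
Qed.

Lemma a3_one_decomposable : decomposable mul a3_one.
Proof.
split; first exact: a3_mul1.
exists [:: bvec R 3 0; a3_one - bvec R 3 0]; split => //; split; last first.
  by rewrite !big_cons big_nil addr0 addrCA subrr addr0.
move=> z; rewrite !inE => /orP[] /eqP -> {z}; split.
- apply/eqP => /(congr1 (fun u : 'rV[R]_4 => co u 0)); rewrite bvecE // mxE.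
  by apply/eqP; rewrite oner_eq0.
- by rewrite /is_idempotent; coord4; field.
- apply/eqP => /(congr1 (fun u : 'rV[R]_4 => co u 1)).
  by rewrite row_inordB a3_oneE // bvecE //= mxE => ?; lra.
- by rewrite /is_idempotent; coord4; field.
Qed.

Lemma a3_nonassociative : mul (mul (bvec R 3 0) (bvec R 3 0)) (bvec R 3 1) !=
  mul (bvec R 3 0) (mul (bvec R 3 0) (bvec R 3 1)).
Proof.
apply/eqP => /(congr1 (fun u : 'rV[R]_4 => co u 3)).
rewrite !(a3_mulE0, a3_mulE1, a3_mulE2, a3_mulE3) !bvecE //= => ?; lra.
Qed.

Lemma NS_claim3A : NS_claim mul.
Proof.
apply: (NS_claim_of_trace_gap (tabmulDl _) (tabmulZl _) a3_mulC a3_mul1 a3_trD a3_trZ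
  a3_tr_sqr_gt0 a3_one_neq0 (b := 8/5)) => //; try lra.
- move=> y /a3_idempotent[->|->|]; first by rewrite eqxx.
    by right; rewrite a3_tr_one; lra.
  by rewrite /a3_tr_values !inE => /or4P[] /eqP -> _; first [by left | right; lra].
- move=> x /a3_idempotent[->|//|].
    by rewrite /a3_tr !mxE => ?; exfalso; lra.
  by rewrite /a3_tr_values !inE => /or4P[] /eqP -> ?; exfalso; lra.
- exact: a3_one_decomposable.
- move=> A dimA assocA; have fullA : A = fullv.
    by apply/eqP; rewrite eqEdim subvf dimvf dim_matrix.
  by case/eqP: a3_nonassociative; apply: assocA; rewrite fullA memvf.
Qed.

End ThreeA.

Theorem mainTheorem9 (R : realType) :
  NS_claim (@mul2A R) /\ NS_claim (@mul3A R) /\ NS_claim (@mul3C R).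
Proof. by split; [exact: NS_claim2A | split; [exact: NS_claim3A | exact: NS_claim3C]]. Qed.
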